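(* If $x,y\in X$ are distinct and form an asymptotic pair for $T$ (i.e. $\lim_{n\to\infty}d(T^n(x),T^n(y))=0$), then $\deg(x)$ and $\deg(y)$ are both finite and $|\deg(x)-\deg(y)|\leq1$. In particular, no point $x\neq p$ is asymptotic to $p=(v_{0,0},v_{1,0},v_{2,0},\ldots)$.
   Context: Paths and cycles: a graph is $G=(V,E)$ with $V$ finite and $E\subset V\times V$. A path is a finite sequence of vertices $(u_0,\dots,u_L)$ with $(u_j,u_{j+1})\in E$; its length is $|\cdot|=L$; a cycle is a path with $u_0=u_L$. For paths where one ends where the next starts, $+$ denotes concatenation and $a\,c$ means the cycle $c$ traversed $a$ times. Construction: $G_0=(V_0,E_0)$ with $V_0=\{v_{0,0}\}$, $E_0=\{e_{0,0}\}$, $e_{0,0}=(v_{0,0},v_{0,0})$. For $n\geq1$, $G_n=(V_n,E_n)$ consists of a vertex $v_{n,0}$, the loop $e_{n,0}=(v_{n,0},v_{n,0})$, and $n$ cycles $c_{n,1},\dots,c_{n,n}$, each starting and ending at $v_{n,0}$, whose vertices other than $v_{n,0}$ are pairwise distinct (within each cycle and across cycles); $V_n$ is the set of all these vertices and $E_n$ consists of $e_{n,0}$ and the edges of the cycles. The maps $\varphi_n\colon V_{n+1}\to V_n$ and the lengths of the cycles $c_{n+1,i}$ are defined together: $\varphi_n(v_{n+1,0})=v_{n,0}$, and for each $i$ a path $P_{n,i}$ in $G_n$ from $v_{n,0}$ to $v_{n,0}$ is given; $c_{n+1,i}$ has length $|P_{n,i}|$ and $\varphi_n$ maps its $j$-th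 vertex to the $j$-th vertex of $P_{n,i}$ (written $\varphi_n(c_{n+1,i})=P_{n,i}$). The paths are: $P_{0,1}=10\,e_{0,0}$; for $n\geq1$: $P_{n,i}=e_{n,0}+2c_{n,i}+2c_{n,i+1}+\dots+2c_{n,n}+e_{n,0}$ for $2\leq i\leq n$; $P_{n,n+1}=(n+2)^2\big(\sum_{i=1}^n|c_{n,i}|\big)\,e_{n,0}$; and $P_{n,1}=(1\,e_{n,0}+2c_{n,1})+(2\,e_{n,0}+2c_{n,1})+\dots+(k_n\,e_{n,0}+2c_{n,1})+e_{n,0}+2c_{n,2}+\dots+2c_{n,n}+e_{n,0}$, where $k_n=2\big(1+\sum_{i=1}^n|c_{n,i}|\big)$. Let $X=\{x\in\prod_{n\geq0}V_n:\varphi_n(x_{n+1})=x_n\ \forall n\}$ with metric $d(x,y)=2^{-\min\{i:x_i\neq y_i\}}$ ($d(x,x)=0$); $X$ is a compact zero-dimensional metric space, and $T\colon X\to X$ defined by $T(x)=y$ iff $(x_n,y_n)\in E_n$ for all $n$ is a well-defined homeomorphism. Write $x_n$ for the $n$-th coordinate of $x$. Degree: for $v\in V_n$, $\deg(v)=+\infty$ if $v=v_{n,0}$ and $\deg(v)=i$ if $v$ is a vertex of $c_{n,i}$ different from $v_{n,0}$; for $x\in X$, $\deg(x)=\min_n\deg(x_n)$. *)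

From mathcomp Require Import all_boot.
From Stdlib Require Import ClassicalEpsilon.
Set Implicit Arguments. Unset Strict Implicit. Unset Printing Implicit Defensive.

(* Vertices of G_n are encoded as pairs of naturals:
   (0,0) is the centre v_{n,0};  (i,j) with 1 <= i <= n, 1 <= j < |c_{n,i}|
   is the j-th vertex of the cycle c_{n,i} (the cycle is
   (v_{n,0}, (i,1), ..., (i,|c_{n,i}|-1), v_{n,0})). *)
Definition vtx := (nat * nat)%type.
Definition center : vtx := (0, 0).

(* A path in G_n starting at v_{n,0} is encoded by the list of its vertices
   after the first one (u_1, ..., u_L); all paths used start at v_{n,0}, and
   all pieces start and end at v_{n,0}, so concatenation is list append. *)

Definition loopP (a : nat) : seq vtx := nseq a center.
(* one traversal of c_{n,i}, where L gives the cycle lengths at level n *)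
Definition cycle_tail (L : nat -> nat) (i : nat) : seq vtx :=
  [seq (i, j) | j <- iota 1 (L i).-1] ++ [:: center].
Definition cycP (L : nat -> nat) (i a : nat) : seq vtx :=
  flatten (nseq a (cycle_tail L i)).

Definition sumL (L : nat -> nat) (n : nat) : nat := \sum_(1 <= k < n.+1) L k.

(* The path P_{n,i} (tail), given the cycle lengths L of level n. *)
Definition ptail (n i : nat) (L : nat -> nat) : seq vtx :=
  if n == 0 then (if i == 1 then loopP 10 else [::])
  else if i == n.+1 then loopP ((n + 2) ^ 2 * sumL L n)
  else if i == 1 then
    flatten [seq loopP m ++ cycP L 1 2 | m <- iota 1 (2 * (1 + sumL L n))]
    ++ loopP 1 ++ flatten [seq cycP L k 2 | k <- iota 2 (n - 1)] ++ loopP 1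
  else if (2 <= i) && (i <= n) then
    loopP 1 ++ flatten [seq cycP L k 2 | k <- iota i (n - i + 1)] ++ loopP 1
  else [::].

(* len n i = |c_{n,i}| (meaningful for 1 <= i <= n); |c_{n+1,i}| = |P_{n,i}| *)
Fixpoint len (n : nat) : nat -> nat :=
  match n with
  | 0 => fun _ => 0
  | m.+1 => fun i => size (ptail m i (len m))
  end.

Definition Ppath (n i : nat) : seq vtx := center :: ptail n i (len n).

Definition inV (n : nat) (v : vtx) : bool :=
  (v == center) || [&& 1 <= v.1, v.1 <= n, 1 <= v.2 & v.2 < len n v.1].

Definition cv (n i j : nat) : vtx :=
  if (j == 0) || (j == len n i) then center else (i, j).

Definition edge (n : nat) (u w : vtx) : Prop :=
  (u = center /\ w = center) \/
  exists i j, [/\ 1 <= i <= n, j < len n i, u = cv n i j & w = cv n i j.+1].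

(* phi_n : V_{n+1} -> V_n ; the j-th vertex of c_{n+1,i} goes to the j-th
   vertex of P_{n,i} *)
Definition phi (n : nat) (v : vtx) : vtx :=
  if v == center then center else nth center (Ppath n v.1) v.2.

Definition pt := nat -> vtx.
Definition inX (x : pt) : Prop :=
  (forall n, inV n (x n)) /\ (forall n, phi n (x n.+1) = x n).

Definition Trel (x y : pt) : Prop := forall n, edge n (x n) (y n).
Definition T (x : pt) : pt :=
  epsilon (inhabits x) (fun y => inX y /\ Trel x y).

(* lim_m d(T^m x, T^m y) = 0 with d(x,y) = 2^{-min{i : x_i <> y_i}}:
   d(u,v) < 2^{-k} iff u_i = v_i for all i <= k. *)
Definition asymptotic (x y : pt) : Prop :=
  forall k, exists N, forall m, N <= m ->
    forall i, i <= k -> iter m T x i = iter m T y i.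

(* degree; None stands for +infinity *)
Definition vdeg (v : vtx) : option nat :=
  if v == center then None else Some v.1.
Definition ole (a b : option nat) : Prop :=
  match b, a with
  | None, _ => True
  | Some _, None => False
  | Some b', Some a' => a' <= b'
  end.
Definition is_min_deg (x : pt) (d : option nat) : Prop :=
  (forall n, ole d (vdeg (x n))) /\ (exists n, vdeg (x n) = d).
Definition deg (x : pt) : option nat :=
  epsilon (inhabits None) (is_min_deg x).

Definition pt_p : pt := fun _ => center.

From mathcomp Require Import all_boot zify.
From Stdlib Require Import ClassicalEpsilon FunctionalExtensionality Wf_nat.
Set Implicit Arguments. Unset Strict Implicit. Unset Printing Implicit Defensive.

(* A point of degree [a] has all its coordinates at the centre or on cycles of index >= a,
   and some coordinate on a cycle of index exactly a; both properties are preserved by T.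
   Once x_n lies on c_{n,a}, so do all x_m with m >= n, and moving along this cycle under T
   the image in G_(m-1) runs through P_{m-1,a} until it enters c_{m-1,a+1}. As every P_{k,j}
   starts with e_{k,0} c_{k,j}, this entrance propagates down to level a+1: the (a+1)-st
   coordinate of the orbit of x leaves the centre infinitely often. For a point of degree at
   least a+2 the coordinates up to level a+1 stay at the centre forever, so it cannot be
   asymptotic to x. The point p has infinite degree. *)

Lemma pair_neq_center i j : (0 < i) || (0 < j) -> (i, j) != center.
Proof. rewrite /center xpair_eqE; lia. Qed.

Lemma cv_neq_center n i j : cv n i j != center -> cv n i j = (i, j).
Proof. by rewrite /cv; case: ifP; rewrite ?eqxx. Qed.

Lemma cv_inner n i j : 0 < j < len n i -> cv n i j = (i, j).
Proof. by move=> hj; rewrite /cv ifF //; lia. Qed.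

Lemma edge_off_center n u w : edge n u w -> u != center -> w = cv n u.1 u.2.+1.
Proof. by case=> [[-> _]|[i [j [_ _ -> ->]]]]; rewrite ?eqxx // => /cv_neq_center ->. Qed.

Lemma edge_from_center n w : edge n center w -> w = center \/ exists i, w = cv n i 1.
Proof.
case=> [[_ ->]|[i [j [_ hj hu ->]]]]; [by left | right; exists i].
suff -> : j = 0 by [].
move: hu; rewrite /cv; case: ifP => [/orP [/eqP //|/eqP ej]|_ [_ ->]] //.
by rewrite ej ltnn in hj.
Qed.

Lemma inV_off_center n v : inV n v -> v != center ->
  [/\ 1 <= v.1, v.1 <= n, 1 <= v.2 & v.2 < len n v.1].
Proof. by rewrite /inV => /orP [/eqP ->|/and4P [? ? ? ?]]; rewrite ?eqxx. Qed.

Lemma len_succ n i : len n.+1 i = size (ptail n i (len n)).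
Proof. by []. Qed.

Lemma len_ge3 n i : 1 <= i <= n -> 3 <= len n i.
Proof.
elim: n i => [|n IH] i /andP [i_gt0 i_le]; first by lia.
rewrite len_succ /ptail.
have [n0|n_gt0] := eqVneq n 0; first by have -> : i = 1 by lia.
have [_|i_neq] := eqVneq i n.+1.
  have len1 := IH 1 (ltac:(lia)).
  have : len n 1 <= sumL (len n) n by rewrite /sumL big_ltn //; lia.
  rewrite size_nseq; nia.
have [_|i_neq1] := eqVneq i 1.
  have -> : 2 * (1 + sumL (len n) n) = (1 + 2 * sumL (len n) n).+1 by lia.
  rewrite /= !size_cat /=; lia.
have -> : (2 <= i) && (i <= n) by lia.
have -> : n - i + 1 = (n - i).+1 by lia.
rewrite /= !size_cat /=; lia.
Qed.

Fixpoint is_walk (e : vtx -> vtx -> Prop) (x : vtx) (l : seq vtx) : Prop :=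
  if l is y :: l' then e x y /\ is_walk e y l' else True.

Lemma is_walk_cat e x l1 l2 :
  is_walk e x l1 -> is_walk e (last x l1) l2 -> is_walk e x (l1 ++ l2).
Proof. by elim: l1 x => [|y l IH] x //= [exy hl] hl2; split; last exact: IH. Qed.

Lemma is_walk_nth e x0 x l j : is_walk e x l -> j < size l ->
  e (nth x0 (x :: l) j) (nth x0 l j).
Proof. by elim: l x j => [|y l IH] x [|j] //= [exy hl] hj; last exact: IH. Qed.

Definition closed_walk n (l : seq vtx) : Prop :=
  [/\ is_walk (edge n) center l, last center l = center & all (inV n) l].

Section ClosedWalks.
Variable n : nat.

Lemma closed_walk_cat l1 l2 :
  closed_walk n l1 -> closed_walk n l2 -> closed_walk n (l1 ++ l2).
Proof.
case=> w1 e1 a1 [w2 e2 a2]; split; last by rewrite all_cat a1.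
- by apply: is_walk_cat; rewrite ?e1.
- by rewrite last_cat e1.
Qed.

Lemma closed_walk_flatten (ls : seq (seq vtx)) :
  (forall l, l \in ls -> closed_walk n l) -> closed_walk n (flatten ls).
Proof.
elim: ls => [|l ls IH] hls //=.
apply: closed_walk_cat; first by apply: hls; exact: mem_head.
by apply: IH => l' hl'; apply: hls; rewrite in_cons hl' orbT.
Qed.

Lemma closed_walk_loop m : closed_walk n (loopP m).
Proof.
elim: m => [|m [w e a]] //; split=> /=.
- by split=> //; left.
- by case: m e {w a}.
- exact: a.
Qed.

Lemma cycle_tail_cv k : 1 <= len n k ->
  cycle_tail (len n) k = map (cv n k) (iota 1 (len n k)).
Proof.
move=> hL; rewrite /cycle_tail.
have -> : iota 1 (len n k) = iota 1 (len n k).-1 ++ [:: len n k].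
  case: (len n k) hL => // L _.
  have -> : L.+1 = L + 1 by rewrite addn1.
  by rewrite iotaD add1n addn1.
rewrite map_cat /= {2}/cv eqxx orbT; congr (_ ++ _).
by apply/eq_in_map => j; rewrite mem_iota => hj; rewrite cv_inner //; lia.
Qed.

Lemma is_walk_cv k m r : 1 <= k <= n -> m + r <= len n k ->
  is_walk (edge n) (cv n k m) (map (cv n k) (iota m.+1 r)).
Proof.
move=> hk; elim: r m => [|r IH] m hr //=.
split; last by apply: IH; lia.
by right; exists k, m; split => //; lia.
Qed.

Lemma closed_walk_cycP k c : 1 <= k <= n -> closed_walk n (cycP (len n) k c).
Proof.
move=> hk; apply: closed_walk_flatten => l; rewrite mem_nseq => /andP [_ /eqP ->].
have h3 := len_ge3 hk; split.
- rewrite cycle_tail_cv; last lia.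
  have -> : center = cv n k 0 by rewrite /cv eqxx.
  by apply: is_walk_cv.
- by rewrite /cycle_tail last_cat.
- rewrite /cycle_tail all_cat andbT; apply/allP => v /mapP [j hj ->].
  rewrite mem_iota in hj; rewrite /inV /=; lia.
Qed.

Lemma closed_walk_cycles i r : 1 <= i -> i + r <= n.+1 ->
  closed_walk n (flatten [seq cycP (len n) k 2 | k <- iota i r]).
Proof.
move=> hi hir; apply: closed_walk_flatten => l /mapP [k hk ->].
by rewrite mem_iota in hk; apply: closed_walk_cycP; lia.
Qed.

End ClosedWalks.

Lemma mem_loopP v m : v \in loopP m -> v = center.
Proof. by rewrite mem_nseq => /andP [_ /eqP]. Qed.

Lemma mem_cycP L k c v : v \in cycP L k c -> v = center \/ v.1 = k.
Proof.
move=> /flattenP [l]; rewrite mem_nseq => /andP [_ /eqP ->].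
rewrite mem_cat => /orP [/mapP [j _ ->]|]; first by right.
by rewrite mem_seq1 => /eqP ->; left.
Qed.

Lemma cycP_head L k : 2 <= L k -> exists s, cycP L k 2 = (k, 1) :: s.
Proof. by rewrite /cycP /cycle_tail; case: (L k) => [|[|l]] //= _; eexists. Qed.

Lemma ptail_loop_or_split n i :
  (exists m, ptail n i (len n) = loopP m) \/
  exists2 X, closed_walk n X & ptail n i (len n) = X ++ [:: center].
Proof.
rewrite /ptail.
have [_|n_gt0] := eqVneq n 0; first by left; case: ifP => _; [exists 10 | exists 0].
have [_|_] := eqVneq i n.+1; first by left; eexists.
have [_|_] := eqVneq i 1.
  right; eexists; last by rewrite !catA.
  apply: closed_walk_cat; last by apply: closed_walk_cycles; lia.
  apply: closed_walk_cat; last exact: closed_walk_loop.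
  apply: closed_walk_flatten => l /mapP [m _ ->].
  by apply: closed_walk_cat; [exact: closed_walk_loop | apply: closed_walk_cycP; lia].
case: ifP => [i_range|_]; last by left; exists 0.
right; eexists; last by rewrite catA.
apply: closed_walk_cat; first exact: closed_walk_loop.
by apply: closed_walk_cycles; lia.
Qed.

Lemma closed_walk_ptail n i : closed_walk n (ptail n i (len n)).
Proof.
case: (ptail_loop_or_split n i) => [[m ->]|[X hX ->]]; first exact: closed_walk_loop.
by apply: closed_walk_cat => //; exact: closed_walk_loop 1.
Qed.

Lemma nth_Ppath_penultimate n i : nth center (Ppath n i) (len n.+1 i).-1 = center.
Proof.
rewrite /Ppath len_succ.
case: (ptail_loop_or_split n i) => [[m ->]|[X [_ eX _] ->]].
  by rewrite -[center :: _]/(nseq m.+1 center) nth_nseq; case: ifP.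
rewrite size_cat addn1 /= -cat_cons nth_cat /= ltnSn.
by have /= -> := nth_last center (center :: X).
Qed.

Lemma mem_ptail n i L v : v \in ptail n i L -> v = center \/ i <= v.1.
Proof.
have mem_cycles k r : v \in flatten [seq cycP L j 2 | j <- iota k r] ->
    v = center \/ k <= v.1.
  move=> /flattenP [l] /mapP [j hj ->] /mem_cycP [->|->]; [by left | right].
  by rewrite mem_iota in hj; lia.
rewrite /ptail; case: ifP => _; first by case: ifP => // _ /mem_loopP; left.
case: ifP => _; first by move/mem_loopP; left.
case: ifP => [/eqP ->|_].
  rewrite mem_cat => /orP [/flattenP [l] /mapP [m _ ->]|].
    by rewrite mem_cat => /orP [/mem_loopP|/mem_cycP [|->]]; [left|left|right].
  rewrite mem_cat => /orP [/mem_loopP|]; first by left.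
  by rewrite mem_cat => /orP [/mem_cycles [|?]|/mem_loopP]; [left|right; lia|left].
case: ifP => // _; rewrite mem_cat => /orP [/mem_loopP|]; first by left.
by rewrite mem_cat => /orP [/mem_cycles|/mem_loopP]; last left.
Qed.

Lemma nth_Ppath1 n i : nth center (Ppath n i) 1 = center.
Proof.
rewrite /Ppath /= /ptail.
case: ifP => _; first by case: ifP.
case: ifP => _; first by rewrite nth_nseq; case: ifP.
case: ifP => _; last by case: ifP.
by have -> : 2 * (1 + sumL (len n) n) = (1 + 2 * sumL (len n) n).+1 by lia.
Qed.

Lemma nth_Ppath2 n k : 2 <= k <= n -> nth center (Ppath n k) 2 = (k, 1).
Proof.
move=> hk; have [s hs] := cycP_head (L := len n) (k := k) (ltac:(have := @len_ge3 n k; lia)).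
rewrite /Ppath /ptail ifF; last lia.
rewrite ifF; last lia.
rewrite ifF; last lia.
rewrite ifT; last lia.
have -> : n - k + 1 = (n - k).+1 by lia.
by rewrite /= hs.
Qed.

Lemma ptail_split_next n a : 1 <= a < n -> exists A B,
  [/\ ptail n a (len n) = A ++ B, 2 <= size B, nth center B 0 = (a.+1, 1)
    & all (fun v : vtx => v.1 != a) B].
Proof.
move=> ha.
have [s hs] := cycP_head (L := len n) (k := a.+1) (ltac:(have := @len_ge3 n a.+1; lia)).
have tail_avoids r : all (fun v : vtx => v.1 != a)
    (flatten [seq cycP (len n) k 2 | k <- iota a.+1 r] ++ loopP 1).
  apply/allP => v; rewrite mem_cat => /orP [|/mem_loopP -> /=]; last lia.
  move=> /flattenP [l] /mapP [k hk ->] /mem_cycP [->|->] /=; first lia.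
  by rewrite mem_iota in hk; lia.
rewrite /ptail ifF; last lia.
rewrite ifF; last lia.
have [ea|a_neq1] := eqVneq a 1.
  subst a; exists (flatten [seq loopP m ++ cycP (len n) 1 2
                            | m <- iota 1 (2 * (1 + sumL (len n) n))] ++ loopP 1).
  exists (flatten [seq cycP (len n) k 2 | k <- iota 2 (n - 1)] ++ loopP 1).
  have -> : n - 1 = (n - 2).+1 by lia.
  split; [by rewrite catA | | by rewrite /= hs | exact: tail_avoids].
  by rewrite /= hs size_cat /=; lia.
rewrite ifT; last lia.
exists (loopP 1 ++ cycP (len n) a 2).
exists (flatten [seq cycP (len n) k 2 | k <- iota a.+1 (n - a.+1).+1] ++ loopP 1).
have -> : n - a + 1 = (n - a.+1).+2 by lia.
split; [by rewrite /= !catA | | by rewrite /= hs | exact: tail_avoids].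
by rewrite /= hs size_cat /=; lia.
Qed.

Lemma phi_center n : phi n center = center.
Proof. by rewrite /phi eqxx. Qed.

Lemma phi_off_center n v : v != center -> phi n v = nth center (Ppath n v.1) v.2.
Proof. by rewrite /phi => /negbTE ->. Qed.

Lemma phi_pair n i j : (0 < i) || (0 < j) -> phi n (i, j) = nth center (Ppath n i) j.
Proof. by move/pair_neq_center/phi_off_center. Qed.

Lemma phi_cv n i j : 1 <= i -> phi n (cv n.+1 i j) = nth center (Ppath n i) j.
Proof.
move=> hi; rewrite /cv; case: ifP => [/orP [/eqP ->|/eqP ->]|_].
- by rewrite phi_center.
- rewrite phi_center /Ppath len_succ.
  have /= -> := nth_last center (center :: ptail n i (len n)).
  by case: (closed_walk_ptail n i).
- by apply: phi_pair; rewrite hi.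
Qed.

Lemma phi_edge n u w : edge n.+1 u w -> edge n (phi n u) (phi n w).
Proof.
case=> [[-> ->]|[i [j [hi hj -> ->]]]]; first by rewrite phi_center; left.
rewrite !phi_cv //; try lia.
have [walk _ _] := closed_walk_ptail n i.
exact: is_walk_nth walk hj.
Qed.

Lemma phi_inV n v : inV n.+1 v -> inV n (phi n v).
Proof.
have [->|hv] := eqVneq v center; first by rewrite phi_center /inV eqxx.
move=> /inV_off_center /(_ hv) [h1 _ _ h4].
rewrite phi_off_center //.
have : nth center (Ppath n v.1) v.2 \in Ppath n v.1 by apply: mem_nth; exact: ltnW h4.
rewrite {2}/Ppath in_cons => /orP [/eqP ->|hm]; first by rewrite /inV eqxx.
by case: (closed_walk_ptail n v.1) => _ _ /allP; apply.
Qed.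

Definition next_vtx n (v : vtx) : vtx :=
  if v == center then center else cv n v.1 v.2.+1.

Lemma next_vtx_edge n v : inV n v -> v != center -> edge n v (next_vtx n v).
Proof.
move=> hV hv; have [h1 h2 h3 h4] := inV_off_center hV hv.
rewrite /next_vtx (negbTE hv); right; exists v.1, v.2; split; rewrite ?h1 //.
by rewrite cv_inner //; [case: v {hV hv h1 h2 h3 h4} | lia].
Qed.

Lemma next_vtx_inV n v : inV n v -> inV n (next_vtx n v).
Proof.
have [->|hv] := eqVneq v center; first by rewrite /next_vtx eqxx.
move=> hV; have [h1 h2 h3 h4] := inV_off_center hV hv.
rewrite /next_vtx (negbTE hv) /cv /inV; case: ifP => [_|hl]; first by rewrite eqxx.
by apply/orP; right => /=; lia.
Qed.

Lemma phi_next_vtx n v : inV n.+1 v -> v != center -> phi n v != center ->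
  phi n (next_vtx n.+1 v) = next_vtx n (phi n v).
Proof.
move=> hV hv hp; have [h1 h2 h3 h4] := inV_off_center hV hv.
rewrite /next_vtx (negbTE hv) (negbTE hp) phi_cv //.
have [walk _ _] := closed_walk_ptail n v.1.
have := is_walk_nth center walk h4; rewrite -/(Ppath n v.1) -phi_off_center //.
by move/edge_off_center; apply.
Qed.

Fixpoint lower (n k : nat) (v : vtx) : vtx :=
  if k is k'.+1 then phi n (lower n.+1 k' v) else v.

Lemma lower_edge k n u w : edge (n + k) u w -> edge n (lower n k u) (lower n k w).
Proof.
elim: k n => [|k IH] n /=; first by rewrite addn0.
by rewrite addnS -addSn => /IH; apply: phi_edge.
Qed.

Lemma lower_inV k n v : inV (n + k) v -> inV n (lower n k v).
Proof.
elim: k n => [|k IH] n /=; first by rewrite addn0.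
by rewrite addnS -addSn => /IH; apply: phi_inV.
Qed.

Lemma lower_coord z k n : inX z -> lower n k (z (n + k)) = z n.
Proof.
case=> _ hz; elim: k n => [|k IH] n /=; first by rewrite addn0.
by rewrite addnS -addSn IH hz.
Qed.

Lemma inX_lower (f : pt) N : (forall n, inV n (f n)) ->
  (forall n, N <= n -> phi n (f n.+1) = f n) ->
  inX (fun n => lower n (N - n) (f (n + (N - n)))).
Proof.
move=> hV hphi; split=> n; first exact/lower_inV/hV.
have [le|lt] := leqP N n.
  have -> : N - n = 0 by lia.
  have -> : N - n.+1 = 0 by lia.
  by rewrite /= !addn0 hphi.
have -> : N - n = (N - n.+1).+1 by lia.
by rewrite -addSnnS.
Qed.

Lemma off_center_succ z n : inX z -> z n != center -> z n.+1 != center.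
Proof. by case=> _ hz; apply: contraNneq => e; rewrite -hz e phi_center. Qed.

Lemma inX_p : inX pt_p.
Proof. by split=> n; rewrite /pt_p ?phi_center // /inV eqxx. Qed.

(* Off the fixed point, some coordinate leaves the centre and then moves along its cycle;
   the moved coordinates are compatible from that level on, and [lower] fills in the rest. *)
Lemma exists_Trel z : inX z -> exists w, inX w /\ Trel z w.
Proof.
move=> hX; have [hV hz] := hX.
case: (classic (exists N, z N != center)) => [[N hN]|hc]; last first.
  have -> : z = pt_p.
    by apply: functional_extensionality => n; apply/eqP; apply: contraT => hn; case: hc; exists n.
  by exists pt_p; split; [exact: inX_p | left].
have above m : N <= m -> z m != center.
  move=> /subnK <-; elim: (m - N) => // d IH.
  by rewrite addSn; exact: off_center_succ hX IH.
pose f n := next_vtx n (z n).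
exists (fun n => lower n (N - n) (f (n + (N - n)))); split.
  apply: inX_lower => [n|n hn]; first exact/next_vtx_inV/hV.
  by rewrite /f phi_next_vtx ?hz ?above //; apply: leqW.
move=> n; rewrite -{1}(lower_coord (N - n) n hX).
by apply/lower_edge/next_vtx_edge/above => //; lia.
Qed.

Lemma T_spec z : inX z -> inX (T z) /\ Trel z (T z).
Proof. by move/exists_Trel; apply: epsilon_spec. Qed.

Lemma inX_iter z t : inX z -> inX (iter t T z).
Proof. by move=> hz; elim: t => //= t /T_spec []. Qed.

Lemma Trel_iter z t : inX z -> Trel (iter t T z) (iter t.+1 T z).
Proof. by move=> hz; exact: (T_spec (inX_iter t hz)).2. Qed.

Lemma iter_T_off_center z t n : inX z -> iter t T z n != center ->
  iter t.+1 T z n = cv n (iter t T z n).1 (iter t T z n).2.+1.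
Proof. by move=> hz; apply/edge_off_center/Trel_iter. Qed.

Definition deg_ge a (w : pt) : Prop := forall n, w n = center \/ a <= (w n).1.
Definition deg_hit a (w : pt) : Prop := exists n, w n != center /\ (w n).1 = a.

Lemma mem_nth_neq_default (U : eqType) (x0 : U) l k : nth x0 l k != x0 -> nth x0 l k \in l.
Proof. by case: (ltnP k (size l)) => [hk _|hk]; [exact: mem_nth | rewrite nth_default ?eqxx]. Qed.

Lemma deg_ge_Trel a w w' : inX w -> inX w' -> Trel w w' -> deg_ge a w -> deg_ge a w'.
Proof.
move=> hX hX' hT hge n.
have [|hn'] := eqVneq (w' n) center; [by left | right].
(* If [w_n] is centred, [w'_n] lies on P_{n,i} for the index [i >= a] of [w_(n+1)];
   [w_(n+1)] is not centred either, as P_{n,i} starts with the loop e_{n,0}. *)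
have [hw|hw] := eqVneq (w n) center; last first.
  rewrite (edge_off_center (hT n) hw) in hn' *; rewrite (cv_neq_center hn') /=.
  by case: (hge n) => // e; rewrite e eqxx in hw.
have hw1' := off_center_succ hX' hn'.
have [hw1|hw1] := eqVneq (w n.+1) center.
  have := hT n.+1; rewrite hw1 => /edge_from_center [e|[i e]].
    by rewrite e eqxx in hw1'.
  rewrite e in hw1'; move: hn'.
  by rewrite -hX'.2 e (cv_neq_center hw1') phi_pair ?orbT // nth_Ppath1 eqxx.
have hu : a <= (w n.+1).1 by case: (hge n.+1) => // e; rewrite e eqxx in hw1.
have ew' := edge_off_center (hT n.+1) hw1.
rewrite ew' in hw1'.
have ew : w' n = nth center (ptail n (w n.+1).1 (len n)) (w n.+1).2.
  by rewrite -hX'.2 ew' (cv_neq_center hw1') phi_pair ?orbT.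
rewrite ew in hn' *.
case: (mem_ptail (mem_nth_neq_default hn')) => [e|]; last exact: leq_trans.
by rewrite e eqxx in hn'.
Qed.

Lemma deg_hit_succ a w n : inX w -> deg_ge a w -> w n != center -> (w n).1 = a ->
  w n.+1 != center /\ (w n.+1).1 = a.
Proof.
move=> hX hge hn ha; have hn1 := off_center_succ hX hn; split=> //.
have hu : a <= (w n.+1).1 by case: (hge n.+1) => // e; rewrite e eqxx in hn1.
move: hn ha; rewrite -hX.2 phi_off_center // => hn ha.
move: (mem_nth_neq_default hn); rewrite in_cons => /orP [/eqP e|/mem_ptail [e|]].
- by rewrite e eqxx in hn.
- by rewrite e eqxx in hn.
- by rewrite -ha in hu *; move=> hl; apply/eqP; rewrite eqn_leq hl hu.
Qed.

Lemma deg_hit_above a w n : inX w -> deg_ge a w -> w n != center -> (w n).1 = a ->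
  forall d, w (n + d) != center /\ (w (n + d)).1 = a.
Proof.
move=> hX hge hn ha; elim=> [|d [hd had]]; first by rewrite addn0.
by rewrite addnS; exact: deg_hit_succ hX hge hd had.
Qed.

(* If the cycle index [a] of [w_n] is minimal, then [w_(n+1)] lies on c_{n+1,a} too and
   cannot be at its last vertex (mapped to the centre), so [T] keeps a coordinate on it. *)
Lemma deg_hit_Trel a w w' : inX w -> inX w' -> Trel w w' -> deg_ge a w -> deg_hit a w ->
  deg_hit a w'.
Proof.
move=> hX hX' hT hge [n [hn ha]].
have [hn1 hn1a] := deg_hit_succ hX hge hn ha.
have [_ _ _ h4] := inV_off_center (hX.1 n.+1) hn1.
have [elast|nlast] := eqVneq (w n.+1).2.+1 (len n.+1 a).
  move: hn; rewrite -hX.2 phi_off_center // hn1a.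
  by rewrite -[(w n.+1).2]/((w n.+1).2.+1.-1) elast nth_Ppath_penultimate eqxx.
exists n.+1; rewrite (edge_off_center (hT n.+1) hn1) hn1a cv_inner; last first.
  by rewrite [_ < len _ _]ltn_neqAle nlast -hn1a.
by rewrite pair_neq_center ?orbT.
Qed.

Lemma deg_ge_iter a z t : inX z -> deg_ge a z -> deg_ge a (iter t T z).
Proof.
move=> hX hge; elim: t => //= t.
exact: deg_ge_Trel (inX_iter t hX) (inX_iter t.+1 hX) (Trel_iter t hX).
Qed.

Lemma deg_hit_iter a z t : inX z -> deg_ge a z -> deg_hit a z -> deg_hit a (iter t T z).
Proof.
move=> hX hge hhit; elim: t => //= t.
apply: deg_hit_Trel (inX_iter t hX) (inX_iter t.+1 hX) (Trel_iter t hX) _.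
exact: deg_ge_iter.
Qed.

Lemma iter_T_along_cycle w m i p : inX w -> 1 <= i -> w m = (i, p) ->
  forall s, p + s < len m i -> iter s T w m = (i, p + s).
Proof.
move=> hX hi hw; elim=> [|s IH] hs; first by rewrite addn0.
rewrite iter_T_off_center // ?IH ?pair_neq_center ?hi //=; try lia.
by rewrite cv_inner ?addnS //; lia.
Qed.

(* P_{m,k} starts with e_{m,0} followed by c_{m,k}, so the vertex (k,1) of level m+1
   is followed by one whose image at level m is (k,1). *)
Lemma iter_T_descend w t m k : inX w -> 2 <= k <= m ->
  iter t T w m.+1 = (k, 1) -> iter t.+1 T w m = (k, 1).
Proof.
move=> hX hk he.
have e : iter t.+1 T w m.+1 = (k, 2).
  rewrite iter_T_off_center // he ?pair_neq_center ?orbT //=.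
  by rewrite cv_inner //; have := @len_ge3 m.+1 k; lia.
by rewrite -(inX_iter t.+1 hX).2 e phi_pair ?orbT //; exact: nth_Ppath2.
Qed.

Lemma iter_T_descend_to w k r t : inX w -> 2 <= k ->
  iter t T w (k + r) = (k, 1) -> iter (t + r) T w k = (k, 1).
Proof.
move=> hX hk; elim: r t => [|r IH] t h; first by rewrite addn0 -h addn0.
rewrite addnS -addSn; apply: IH.
by apply: iter_T_descend; rewrite -?addnS //; lia.
Qed.

(* A point on c_{n+1,a} whose image lies on c_{n,a} walks along c_{n+1,a} until its image
   reaches the part of P_{n,a} after the cycles of index [a], which starts at (a+1,1). *)
Lemma iter_T_reaches_next_cycle a w n p : inX w -> 1 <= a < n ->
  w n.+1 = (a, p) -> (w n).1 = a -> exists s, iter s T w n = (a.+1, 1).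
Proof.
move=> hX ha eu hna.
have a_gt0 : 0 < a by case/andP: ha.
have hn : w n != center by apply: contraTneq a_gt0 => e; rewrite -hna e.
have [A [B [eAB hB2 hB0 hBa]]] := ptail_split_next ha.
have ephi : nth center (Ppath n a) p = w n by rewrite -hX.2 eu phi_pair ?a_gt0.
have hpA : p <= size A.
  rewrite leqNgt; apply/negP => hlt.
  move: ephi; rewrite /Ppath eAB.
  have -> : p = p.-1.+1 by lia.
  rewrite /= nth_cat ifF; last lia.
  move=> eB; have hm : nth center B (p.-1 - size A) != center by rewrite eB.
  by have := allP hBa _ (mem_nth_neq_default hm); rewrite eB hna eqxx.
have hlen : len n.+1 a = size A + size B by rewrite len_succ eAB size_cat.
have hw := iter_T_along_cycle hX a_gt0 eu (s := (size A).+1 - p) (ltac:(lia)).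
exists ((size A).+1 - p).
rewrite -(inX_iter _ hX).2 hw phi_pair ?a_gt0 // /Ppath eAB.
have -> : p + ((size A).+1 - p) = (size A).+1 by lia.
by rewrite /= nth_cat ltnn subnn.
Qed.

Lemma iter_T_next_level a w : inX w -> deg_ge a w -> deg_hit a w ->
  exists s, iter s T w a.+1 != center.
Proof.
move=> hX hge [n0 [hn ha]].
have a_gt0 : 0 < a by rewrite -ha; case: (inV_off_center (hX.1 n0) hn).
have [n [an hna hn1a]] : exists n, [/\ a < n, (w n).1 = a & (w n.+1).1 = a].
  have above := deg_hit_above hX hge hn ha.
  have [[_ h1] [_ h2]] := (above a.+1, above a.+2).
  by exists (n0 + a.+1); rewrite addnS in h2; split=> //; lia.
have eu : w n.+1 = (a, (w n.+1).2) by rewrite -hn1a; case: (w n.+1).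
have a_range : 1 <= a < n by lia.
have [s hs] := iter_T_reaches_next_cycle hX a_range eu hna.
have := @iter_T_descend_to w a.+1 (n - a.+1) s hX a_gt0.
by rewrite subnKC // => /(_ hs) e; exists (s + (n - a.+1)); rewrite e.
Qed.

Lemma iter_T_next_level_after a z t0 : inX z -> deg_ge a z -> deg_hit a z ->
  exists2 t, t0 <= t & iter t T z a.+1 != center.
Proof.
move=> hX hge hhit.
have [s hs] := iter_T_next_level (inX_iter t0 hX) (deg_ge_iter t0 hX hge)
  (deg_hit_iter t0 hX hge hhit).
by exists (s + t0); [exact: leq_addl | rewrite iterD].
Qed.

Lemma deg_ge_below b w m : inX w -> deg_ge b w -> m < b -> w m = center.
Proof.
move=> hX hge hm; apply/eqP; apply: contraT => hn.
have [_ h2 _ _] := inV_off_center (hX.1 m) hn.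
by case: (hge m) => [e|h]; [rewrite e eqxx in hn | lia].
Qed.

Lemma not_asymptotic_of_deg_gap a b x y : inX x -> inX y ->
  deg_ge a x -> deg_hit a x -> deg_ge b y -> a.+2 <= b -> ~ asymptotic x y.
Proof.
move=> hx hy hax hhit hby hab /(_ a.+1) [N hN].
have [t hNt ht] := iter_T_next_level_after N hx hax hhit.
have := deg_ge_below (inX_iter t hy) (deg_ge_iter t hy hby) (m := a.+1) hab.
by rewrite -(hN t hNt a.+1 (leqnn _)) => e; rewrite e eqxx in ht.
Qed.

Lemma asymptotic_sym x y : asymptotic x y -> asymptotic y x.
Proof. by move=> h k; have [N hN] := h k; exists N => m hm i hi; rewrite hN. Qed.

Lemma ole_anti a b : ole a b -> ole b a -> a = b.
Proof. by case: a b => [a|] [b|] //= h1 h2; congr Some; apply/eqP; rewrite eqn_leq h1 h2. Qed.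

Lemma deg_eq x d : is_min_deg x d -> deg x = d.
Proof.
move=> hd; have [hmin [n hn]] := epsilon_spec (inhabits None) (is_min_deg x) (ex_intro _ d hd).
case: hd => hdmin [m hm]; apply: ole_anti.
- by rewrite -hm; exact: hmin.
- by rewrite /deg -hn; exact: hdmin.
Qed.

Lemma deg_of_bounds a w : deg_ge a w -> deg_hit a w -> deg w = Some a.
Proof.
move=> hge [m [hm ha]]; apply: deg_eq; split; last by exists m; rewrite /vdeg (negbTE hm) ha.
by move=> n; rewrite /vdeg; case: (hge n) => [->|]; rewrite ?eqxx //; case: ifP.
Qed.

Lemma exists_deg_bounds w : w <> pt_p -> exists a, deg_ge a w /\ deg_hit a w.
Proof.
move=> hp; have hex : exists a, deg_hit a w.
  apply: NNPP => hno; apply: hp; apply: functional_extensionality => n.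
  have [//|hn] := eqVneq (w n) center.
  by case: hno; exists (w n).1, n.
have [a [[hhit hmin] _]] :=
  @dec_inh_nat_subset_has_unique_least_element _ (fun a => classic (deg_hit a w)) hex.
exists a; split=> // n; have [->|hn] := eqVneq (w n) center; [by left | right].
by apply/leP; apply: hmin; exists n.
Qed.

Lemma deg_ge_p b : deg_ge b pt_p.
Proof. by left. Qed.

Lemma not_asymptotic_p x : inX x -> x <> pt_p -> ~ asymptotic x pt_p.
Proof.
move=> hx /exists_deg_bounds [a [hge hhit]].
exact: not_asymptotic_of_deg_gap hx inX_p hge hhit (deg_ge_p a.+2) (leqnn _).
Qed.

Theorem corollary3p10 :
  (forall x y : pt, inX x -> inX y -> x <> y -> asymptotic x y ->
     exists a b : nat, deg x = Some a /\ deg y = Some b /\ a <= b.+1 /\ b <= a.+1)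
  /\ (forall x : pt, inX x -> x <> pt_p -> ~ asymptotic x pt_p).
Proof.
split=> [x y hx hy hxy hasym|]; last exact: not_asymptotic_p.
have [ex|xp] := classic (x = pt_p).
  have yp : y <> pt_p by move=> ey; apply: hxy; rewrite ex ey.
  by case: (not_asymptotic_p hy yp); apply: asymptotic_sym; rewrite -ex.
have [ey|yp] := classic (y = pt_p).
  by case: (not_asymptotic_p hx xp); rewrite -ey.
have [a [hxa hxhit]] := exists_deg_bounds xp.
have [b [hyb hyhit]] := exists_deg_bounds yp.
exists a, b; rewrite (deg_of_bounds hxa hxhit) (deg_of_bounds hyb hyhit).
split=> //; split=> //; split; rewrite leqNgt; apply/negP => gap.
- exact: not_asymptotic_of_deg_gap hy hx hyb hyhit hxa gap (asymptotic_sym hasym).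
- exact: not_asymptotic_of_deg_gap hx hy hxa hxhit hyb gap hasym.
Qed.
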